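(* Let $\rho:F_2=\langle a,b\rangle\to PSL(2,\mathbb{C})$ be an irreducible representation with principal character $(\gamma,0,-4)$ (so $\rho(a)$ is parabolic and $\rho(b)$ is elliptic of order two), and let $w$ be a good word. Then $(p_w(\gamma),0,-4)$ is the principal character of a representation $\rho_w:F_2\to PSL(2,\mathbb{C})$, and $\rho_w$ is discrete (i.e. $\rho_w(F_2)$ is a discrete subgroup) if $\rho$ is.
   Context: For $\rho:F_2\to PSL(2,\mathbb{C})$ the principal character is $(\operatorname{tr}[\rho(a),\rho(b)]-2,\ \operatorname{tr}^2\rho(a)-4,\ \operatorname{tr}^2\rho(b)-4)$. For $x,y\in PSL(2,\mathbb{C})$ write $\gamma(x,y)=\operatorname{tr}[x,y]-2$. A good word is a reduced word $w=a^{m_1}ba^{m_2}b\cdots ba^{m_n}$ in the group $\langle a,b\mid b^2=1\rangle\cong\mathbb{Z}*\mathbb{Z}_2$ with $n\ge 3$ (at least two occurrences of $b$) and $m_i\neq0$ for $2\le i\le n-1$. For a good word $w$, $p_w\in\mathbb{Z}[z]$ denotes the word polynomial: the unique (monic, integer) polynomial such that for every parabolic $f\in PSL(2,\mathbb{C})$ and every elliptic $\phi\in PSL(2,\mathbb{C})$ of order two, $\gamma(f,w(f,\phi))=p_w(\gamma(f,\phi))$, where $w(f,\phi)$ is obtained by substituting $a=f$, $b=\phi$. *)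

From HB Require Import structures.
From mathcomp Require Import all_boot all_order all_algebra.
From mathcomp Require Import reals complex.
Set Implicit Arguments. Unset Strict Implicit. Unset Printing Implicit Defensive.
Import Order.TTheory GRing.Theory Num.Theory.
Local Open Scope ring_scope.
Local Open Scope complex_scope.

Section Defs.
Variable R : realType.
Notation C := (R[i]).
Notation M := ('M[C]_2).

(* elements of SL(2,C); elements of PSL(2,C) are represented by their lifts *)
Definition inSL (x : M) : Prop := \det x = 1.

Definition gammaC (x y : M) : C := \tr (x * y * x^-1 * y^-1) - 2.
Definition betaC (x : M) : C := (\tr x) ^+ 2 - 4.

Definition principal_character (A B : M) : C * C * C :=
  (gammaC A B, betaC A, betaC B).

(* a representation F_2 -> PSL(2,C), given by (lifts of) the images of a, b *)
Definition is_rep (A B : M) : Prop := inSL A /\ inSL B.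

Definition parabolic (f : M) : Prop :=
  inSL f /\ (\tr f) ^+ 2 = 4 /\ f <> 1 /\ f <> - 1.
Definition elliptic2 (phi : M) : Prop := inSL phi /\ \tr phi = 0.

Definition irreducible_rep (A B : M) : Prop :=
  ~ exists (v : 'cV[C]_2) (l m : C),
      v != 0 /\ A *m v = l *: v /\ B *m v = m *: v.

Inductive gen2 (A B : M) : M -> Prop :=
  | gen2_1 : gen2 A B 1
  | gen2_A : gen2 A B A
  | gen2_B : gen2 A B B
  | gen2_inv x : gen2 A B x -> gen2 A B x^-1
  | gen2_mul x y : gen2 A B x -> gen2 A B y -> gen2 A B (x * y).

Definition near (x y : M) (e : C) : Prop := forall i j, `|x i j - y i j| < e.

(* the image of the representation in PSL(2,C) is discrete:
   the identity of PSL(2,C) is isolated in it *)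
Definition discrete_rep (A B : M) : Prop :=
  exists e : C, 0 < e /\
    forall g, gen2 A B g -> g <> 1 -> g <> - 1 ->
      ~ near g 1 e /\ ~ near g (- 1) e.

(* words a^{m_1} b a^{m_2} b ... b a^{m_n} in <a,b | b^2 = 1>,
   encoded by the exponent list [:: m_1; ...; m_n] *)
Fixpoint word_eval (f phi : M) (ms : seq int) : M :=
  match ms with
  | [::] => 1
  | [:: m] => f ^ m
  | m :: ms' => f ^ m * phi * word_eval f phi ms'
  end.

Definition good_word (ms : seq int) : Prop :=
  (3 <= size ms)%N /\
  forall i, (0 < i)%N -> (i < (size ms).-1)%N -> nth 0 ms i <> 0.

Definition peval (p : {poly int}) (x : C) : C :=
  (map_poly (fun z : int => z%:~R) p).[x].

Definition word_poly (ms : seq int) (p : {poly int}) : Prop :=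
  p \is monic /\
  forall f phi, parabolic f -> elliptic2 phi ->
    gammaC f (word_eval f phi ms) = peval p (gammaC f phi).

End Defs.

From HB Require Import structures.
From mathcomp Require Import all_boot all_order all_algebra.
From mathcomp Require Import reals complex.
From mathcomp Require Import ring lra.
From Stdlib Require Import Classical_Prop.
Set Implicit Arguments. Unset Strict Implicit. Unset Printing Implicit Defensive.
Import Order.TTheory GRing.Theory Num.Theory.
Import ComplexField.Normc.
Local Open Scope ring_scope.
Local Open Scope complex_scope.

(* Up to conjugation and signs, a pair (f, phi) with f parabolic, phi of order two
   and gamma = gamma(f, phi) <> 0 is (U, Y_c), with U = [[1,1],[0,1]],
   Y_c = [[i,0],[c,-i]] and c^2 = gamma, because gamma(U, X) = X_10^2 for X in
   SL(2,C); hence discreteness of such a pair depends on gamma only.  If <U, Y_c> is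
   discrete, so is its subgroup <U, W> with W = w(U, Y_c), and gamma(U, W) = p_w(gamma).
   The half-turn h = [[i,s],[0,-i]] with tr (h W) = 0 conjugates U and W to their
   inverses, so <U, h W> lies in an index-two extension of <U, W> and is still
   discrete, while gamma(U, h W) = - gamma(U, W).  Two such steps produce an element
   psi of order two with <U, psi> discrete and gamma(U, psi) = p_w(gamma).  Pairs
   with gamma = 0 are reducible and always discrete. *)

(* Polynomial identities modulo a relation G = H, with the cofactor k given by hand. *)
Lemma eq_lincomb1 (T : comPzRingType) (k E F G H : T) :
  E - F = k * (G - H) -> G = H -> E = F.
Proof. by move=> h e; apply/eqP; rewrite -subr_eq0 h e subrr mulr0. Qed.

Lemma eq_lincomb3 (T : comPzRingType) (k1 k2 k3 E F G1 H1 G2 H2 G3 H3 : T) :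
  E - F = k1 * (G1 - H1) + k2 * (G2 - H2) + k3 * (G3 - H3) ->
  G1 = H1 -> G2 = H2 -> G3 = H3 -> E = F.
Proof.
by move=> h e1 e2 e3; apply/eqP; rewrite -subr_eq0 h e1 e2 e3 !subrr !mulr0 !addr0.
Qed.

Lemma ord2P (i : 'I_2) : i = 0 \/ i = 1.
Proof. by case: i => [[|[|]]] //= ?; [left|right]; apply: val_inj. Qed.

Section ExplicitMatrices.
Variable T : comUnitRingType.
Implicit Types (a b c d : T) (X Y : 'M[T]_2).

Definition mx2 a b c d : 'M[T]_2 := \matrix_(i, j)
  if i == 0 then (if j == 0 then a else b) else (if j == 0 then c else d).

Lemma mx2E X : X = mx2 (X 0 0) (X 0 1) (X 1 0) (X 1 1).
Proof.
by apply/matrixP => i j; rewrite mxE; case: (ord2P i) => ->; case: (ord2P j) => ->.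
Qed.

Lemma mx2_10 a b c d : mx2 a b c d 1 0 = c. Proof. by rewrite mxE. Qed.

Lemma mx2_eq a b c d (a' b' c' d' : T) :
  a = a' -> b = b' -> c = c' -> d = d' -> mx2 a b c d = mx2 a' b' c' d'.
Proof. by move=> -> -> -> ->. Qed.

Lemma mulmx2 a b c d (a' b' c' d' : T) :
  mx2 a b c d * mx2 a' b' c' d' =
  mx2 (a * a' + b * c') (a * b' + b * d') (c * a' + d * c') (c * b' + d * d').
Proof.
apply/matrixP => i j; rewrite -mulmxE !mxE !big_ord_recl big_ord0 !mxE /=.
by case: (ord2P i) => ->; case: (ord2P j) => -> /=; rewrite addr0.
Qed.

Lemma addmx2 a b c d (a' b' c' d' : T) :
  mx2 a b c d + mx2 a' b' c' d' = mx2 (a + a') (b + b') (c + c') (d + d').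
Proof.
by apply/matrixP => i j; rewrite !mxE; case: (ord2P i) => ->; case: (ord2P j) => ->.
Qed.

Lemma oppmx2 a b c d : - mx2 a b c d = mx2 (- a) (- b) (- c) (- d).
Proof.
by apply/matrixP => i j; rewrite !mxE; case: (ord2P i) => ->; case: (ord2P j) => ->.
Qed.

Lemma mx2_1 : 1 = mx2 1 0 0 1.
Proof.
by apply/matrixP => i j; rewrite !mxE; case: (ord2P i) => ->; case: (ord2P j) => ->.
Qed.

Lemma mx2_N1 : -1 = mx2 (-1) 0 0 (-1).
Proof. by rewrite mx2_1 oppmx2 oppr0. Qed.

Lemma det_mx2 a b c d : \det (mx2 a b c d) = a * d - b * c.
Proof.
rewrite (expand_det_row _ 0) !big_ord_recl big_ord0 /cofactor !det_mx11 !mxE /=.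
by rewrite !expr0 expr1 /=; ring.
Qed.

Lemma tr_mx2 a b c d : \tr (mx2 a b c d) = a + d.
Proof. by rewrite /mxtrace !big_ord_recl big_ord0 !mxE /= addr0. Qed.

Lemma unit_det1 X : \det X = 1 -> X \is a GRing.unit.
Proof. by move=> dX; rewrite -[_ \is a _]/(X \in unitmx) unitmxE dX unitr1. Qed.

Lemma inv_eq_mulr1 X Y : X * Y = 1 -> X^-1 = Y.
Proof.
move=> XY; have [uX _] := mulmx1_unit XY.
by rewrite -[LHS]mulr1 -XY mulrA mulVr // mul1r.
Qed.

Lemma invmx2 a b c d : a * d - b * c = 1 -> (mx2 a b c d)^-1 = mx2 d (- b) (- c) a.
Proof. by move=> h; apply: inv_eq_mulr1; rewrite mulmx2 mx2_1 -h; apply: mx2_eq; ring. Qed.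

Lemma det_mulM X Y : \det (X * Y) = \det X * \det Y.
Proof. by rewrite -mulmxE det_mulmx. Qed.

Lemma det_invM X : \det X = 1 -> \det X^-1 = 1.
Proof. by move=> h; rewrite [X^-1]/= det_inv h invr1. Qed.

Lemma det_oppM X : \det (- X) = \det X.
Proof. by rewrite [X]mx2E oppmx2 !det_mx2; ring. Qed.

End ExplicitMatrices.

Section SL2.
Variable R : realType.
Local Notation C := R[i].
Local Notation M := 'M[C]_2.
Implicit Types (X Y P Q : M) (b : bool).

Lemma mulii : 'i * 'i = -1 :> C.
Proof. by rewrite -expr2 sqr_i. Qed.

Definition translation (x : C) : M := mx2 1 x 0 1.
Definition std_parabolic : M := translation 1.
Definition half_turn (c : C) : M := mx2 'i 0 c (- 'i).
(* PSL(2,C) identifies X with -X *)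
Definition pm b X := if b then - X else X.

Lemma translationD x y : translation x * translation y = translation (x + y).
Proof. by rewrite mulmx2; apply: mx2_eq; ring. Qed.

Lemma translation0 : translation 0 = 1.
Proof. by rewrite mx2_1. Qed.

Lemma translationV x : (translation x)^-1 = translation (- x).
Proof. by apply: inv_eq_mulr1; rewrite translationD subrr translation0. Qed.

Lemma det_translation x : \det (translation x) = 1.
Proof. by rewrite det_mx2; ring. Qed.

Lemma tr_std_parabolic : \tr std_parabolic = 2.
Proof. by rewrite tr_mx2. Qed.

Lemma det_half_turn c : \det (half_turn c) = 1.
Proof. by rewrite det_mx2; apply: (eq_lincomb1 (k := -1) _ mulii); ring. Qed.

Lemma tr_half_turn c : \tr (half_turn c) = 0.
Proof. by rewrite tr_mx2 subrr. Qed.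

Lemma std_parabolicP : parabolic std_parabolic.
Proof.
have neq_e01 (S : M) : S 0 1 = 0 -> std_parabolic <> S.
  by move=> S01 e; move: S01; rewrite -e mxE /=; apply/eqP; apply: oner_neq0.
split; first exact: det_translation.
split; first by rewrite tr_std_parabolic; ring.
by split; apply: neq_e01; rewrite ?mx2_N1 ?[1 : M]mx2_1 mxE.
Qed.

Lemma half_turnP c : elliptic2 (half_turn c).
Proof. by split; [apply: det_half_turn | apply: tr_half_turn]. Qed.

Lemma unit_std_parabolic : std_parabolic \is a GRing.unit.
Proof. exact/unit_det1/det_translation. Qed.

Lemma unit_half_turn c : half_turn c \is a GRing.unit.
Proof. exact/unit_det1/det_half_turn. Qed.

Lemma pm_mul b1 b2 X Y : pm b1 X * pm b2 Y = pm (b1 (+) b2) (X * Y).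
Proof. by case: b1; case: b2; rewrite /pm /= ?mulrN ?mulNr ?opprK. Qed.

Lemma pm_inv b X : (pm b X)^-1 = pm b X^-1.
Proof. by case: b; rewrite /pm ?invrN. Qed.

Lemma pmN b X : pm b (- X) = pm (~~ b) X.
Proof. by case: b; rewrite /pm ?opprK. Qed.

Lemma pmK b X : pm b (pm b X) = X.
Proof. by case: b; rewrite /pm ?opprK. Qed.

Lemma pm_unit b X : X \is a GRing.unit -> pm b X \is a GRing.unit.
Proof. by case: b; rewrite /pm ?unitrN. Qed.

Lemma mxtraceN X : \tr (- X) = - \tr X.
Proof. exact: raddfN. Qed.

Lemma tr_pm0 b X : \tr X = 0 -> \tr (pm b X) = 0.
Proof. by move=> tX; case: b; rewrite /pm /= ?mxtraceN tX ?oppr0. Qed.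

Lemma conj_pm P X b : P^-1 * pm b X * P = pm b (P^-1 * X * P).
Proof. by case: b; rewrite /pm ?mulrN ?mulNr. Qed.

Lemma conj_mul P X Y : P \is a GRing.unit ->
  (P^-1 * X * P) * (P^-1 * Y * P) = P^-1 * (X * Y) * P.
Proof. by move=> uP; rewrite !mulrA mulrK // mulrA. Qed.

Lemma conjV P X : P \is a GRing.unit -> X \is a GRing.unit ->
  (P^-1 * X * P)^-1 = P^-1 * X^-1 * P.
Proof.
move=> uP uX; have uPX : P^-1 * X \is a GRing.unit by rewrite unitrMl ?unitrV.
by rewrite invrM // invrM ?unitrV // invrK mulrA.
Qed.

Lemma conjM P Q X : P \is a GRing.unit -> Q \is a GRing.unit ->
  (P * Q)^-1 * X * (P * Q) = Q^-1 * (P^-1 * X * P) * Q.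
Proof. by move=> uP uQ; rewrite invrM // !mulrA. Qed.

Lemma conjK P X : P \is a GRing.unit -> P * (P^-1 * X * P) / P = X.
Proof. by move=> uP; rewrite mulrA mulrK // mulrA mulrV // mul1r. Qed.

Lemma conj_eq Q X Z : Q \is a GRing.unit -> X * Q = Q * Z -> Q^-1 * X * Q = Z.
Proof. by move=> uQ h; rewrite -mulrA h mulrA mulVr // mul1r. Qed.

Lemma tr_conj P X : P \is a GRing.unit -> \tr (P^-1 * X * P) = \tr X.
Proof. by move=> uP; rewrite -!mulmxE mxtrace_mulC !mulmxE mulrA mulrV // mul1r. Qed.

Lemma det_conj P X : P \is a GRing.unit -> \det (P^-1 * X * P) = \det X.
Proof.
move=> uP; rewrite !det_mulM mulrC mulrA -det_mulM mulrV //.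
by rewrite det1 mul1r.
Qed.

Lemma gammaC_conj P X Y : P \is a GRing.unit ->
  X \is a GRing.unit -> Y \is a GRing.unit ->
  gammaC (P^-1 * X * P) (P^-1 * Y * P) = gammaC X Y.
Proof.
move=> uP uX uY; rewrite /gammaC !conjV //.
by rewrite -(tr_conj (X * Y * X^-1 * Y^-1) uP) !mulrA !mulrK.
Qed.

Lemma gammaC_pml b X Y : gammaC (pm b X) Y = gammaC X Y.
Proof. by case: b; rewrite /gammaC /pm ?invrN ?(mulrN, mulNr) ?opprK. Qed.

Lemma gammaC_pm1 b Y : Y \is a GRing.unit -> gammaC (pm b 1) Y = 0.
Proof.
by move=> uY; rewrite gammaC_pml /gammaC invr1 mul1r mulr1 mulrV // mxtrace1 subrr.
Qed.

Lemma gammaC_std_parabolic Y : \det Y = 1 -> gammaC std_parabolic Y = Y 1 0 ^+ 2.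
Proof.
rewrite [Y]mx2E det_mx2 mx2_10 => dY.
rewrite /gammaC /std_parabolic /translation (invmx2 (a := 1)); last by ring.
by rewrite invmx2 // !mulmx2 tr_mx2; apply: (eq_lincomb1 (k := 2) _ dY); ring.
Qed.

Lemma tr0_sqr X : \det X = 1 -> \tr X = 0 -> X * X = -1.
Proof.
rewrite [X]mx2E det_mx2 tr_mx2 mulmx2 mx2_N1 => dX tX.
have eX11 : X 1 1 = - X 0 0 by apply: (eq_lincomb1 (k := 1) _ tX); ring.
rewrite eX11 in dX *.
by apply: mx2_eq; try ring; apply: (eq_lincomb1 (k := -1) _ dX); ring.
Qed.

Lemma tr0_mx2E Y : \tr Y = 0 -> Y = mx2 (Y 0 0) (Y 0 1) (Y 1 0) (- Y 0 0).
Proof.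
move=> tY; rewrite {1}[Y]mx2E; congr mx2.
have tY' : Y 0 0 + Y 1 1 = 0 by rewrite -(tr_mx2 _ (Y 0 1) (Y 1 0)) -mx2E.
by apply: (eq_lincomb1 (k := 1) _ tY'); ring.
Qed.

Lemma translation_tr0C x Y : \tr Y = 0 -> x * Y 1 0 = 0 ->
  Y * translation x = translation (- x) * Y.
Proof.
move=> tY xY; rewrite (tr0_mx2E tY) !mulmx2.
by apply: mx2_eq; try ring; apply: (eq_lincomb1 (k := 1) _ xY); ring.
Qed.

Lemma tr_translation_mul x Y : \tr Y = 0 -> \tr (translation x * Y) = x * Y 1 0.
Proof. by move=> /tr0_mx2E ->; rewrite mulmx2 tr_mx2 mx2_10; ring. Qed.

Lemma betaC0_tr X : betaC X = 0 -> \tr X = 2 \/ \tr X = -2.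
Proof.
rewrite /betaC => h; have : (\tr X - 2) * (\tr X + 2) = 0 by rewrite -h; ring.
move/eqP; rewrite mulf_eq0 => /orP [] /eqP h'; [left|right];
  by apply: (eq_lincomb1 (k := 1) _ h'); ring.
Qed.

Lemma betaCN4_tr Y : betaC Y = -4 -> \tr Y = 0.
Proof.
rewrite /betaC => h; have : \tr Y ^+ 2 = 0 by apply: (eq_lincomb1 (k := 1) _ h); ring.
by move/eqP; rewrite expf_eq0 /= => /eqP.
Qed.

End SL2.

Section NormalForms.
Variable R : realType.
Local Notation C := R[i].
Local Notation M := 'M[C]_2.
Local Notation U := (@std_parabolic R).
Implicit Types (X Y P Q : M) (b : bool).

Definition pe_pair X Y := [/\ \det X = 1, betaC X = 0, \det Y = 1 & betaC Y = -4].

Lemma pe_pairP X Y g : is_rep X Y -> principal_character X Y = (g, 0, -4) ->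
  pe_pair X Y /\ gammaC X Y = g.
Proof. by move=> [dX dY] [gXY bX bY]. Qed.

Lemma unit_det_neq0 X : \det X != 0 -> X \is a GRing.unit.
Proof. by move=> h; rewrite -[_ \is a _]/(X \in unitmx) unitmxE unitfE. Qed.

Lemma tr2_conj_std_parabolic X : \det X = 1 -> \tr X = 2 -> X <> 1 ->
  exists2 Q, Q \is a GRing.unit & Q^-1 * X * Q = U.
Proof.
rewrite [X]mx2E det_mx2 tr_mx2.
move: (X 0 0) (X 0 1) (X 1 0) (X 1 1) => a b c d dX tX X_neq1.
have ed : d = 2 - a by apply: (eq_lincomb1 (k := 1) _ tX); ring.
subst d.
have [c0|c_neq0] := eqVneq c 0.
- subst c; have a1 : a = 1.
    have : (a - 1) ^+ 2 = 0 by apply: (eq_lincomb1 (k := -1) _ dX); ring.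
    by move/eqP; rewrite expf_eq0 /= subr_eq0 => /eqP.
  subst a.
  have b_neq0 : b != 0.
    by apply: contra_notN X_neq1 => /eqP ->; rewrite mx2_1; apply: mx2_eq => //; ring.
  have uQ : mx2 b 0 0 1 \is a GRing.unit.
    by apply: unit_det_neq0; rewrite det_mx2 mulr1 mulr0 subr0.
  exists (mx2 b 0 0 1) => //; apply: conj_eq => //.
  by rewrite !mulmx2; apply: mx2_eq; ring.
- have uQ : mx2 (a - 1) 1 c 0 \is a GRing.unit.
    by apply: unit_det_neq0; rewrite det_mx2 mulr0 mul1r sub0r oppr_eq0.
  exists (mx2 (a - 1) 1 c 0) => //; apply: conj_eq => //.
  rewrite !mulmx2; apply: mx2_eq; try ring.
  by apply: (eq_lincomb1 (k := -1) _ dX); ring.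
Qed.

Lemma parabolic_conj_pm X : \det X = 1 -> betaC X = 0 -> X <> 1 -> X <> -1 ->
  exists Q b, Q \is a GRing.unit /\ Q^-1 * X * Q = pm b U.
Proof.
move=> dX bX X_neq1 X_neqN1.
case: (betaC0_tr bX) => tX.
  by have [Q uQ hQ] := tr2_conj_std_parabolic dX tX X_neq1; exists Q, false.
have [Q uQ hQ] : exists2 Q, Q \is a GRing.unit & Q^-1 * (- X) * Q = U.
  apply: tr2_conj_std_parabolic; first by rewrite det_oppM.
    by rewrite mxtraceN tX opprK.
  by move=> e; apply: X_neqN1; rewrite -e opprK.
by exists Q, true; split => //; rewrite /pm -hQ mulrN mulNr opprK.
Qed.

Lemma conj_half_turn (a b c : C) : a * (- a) - b * c = 1 -> c != 0 ->
  exists2 T, T \is a GRing.unit &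
    T^-1 * U * T = U /\ T^-1 * mx2 a b c (- a) * T = half_turn c.
Proof.
move=> dY c_neq0.
have [s hs] : exists s, s * c = a - 'i by exists ((a - 'i) / c); rewrite mulfVK.
have uT : translation s \is a GRing.unit := unit_det1 (det_translation s).
exists (translation s) => //; split; apply: conj_eq => //.
  by rewrite /std_parabolic !translationD addrC.
rewrite /half_turn !mulmx2; apply: mx2_eq.
- by apply: (eq_lincomb1 (k := -1) _ hs); ring.
- apply: (mulfI c_neq0).
  by apply: (eq_lincomb3 (k1 := a + 'i) (k2 := -1) (k3 := -1) _ hs dY (mulii R)); ring.
- ring.
- by apply: (eq_lincomb1 (k := 1) _ hs); ring.
Qed.

Lemma pe_pair_conj_triangular X Y : pe_pair X Y -> X <> 1 -> X <> -1 ->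
  exists Q b (a b' c : C), [/\ Q \is a GRing.unit, Q^-1 * X * Q = pm b U,
    Q^-1 * Y * Q = mx2 a b' c (- a), a * (- a) - b' * c = 1 & c ^+ 2 = gammaC X Y].
Proof.
case=> dX bX dY bY X_neq1 X_neqN1.
have [Q [b [uQ hQ]]] := parabolic_conj_pm dX bX X_neq1 X_neqN1.
set Y' := Q^-1 * Y * Q.
have dY' : \det Y' = 1 by rewrite det_conj.
have eY' : Y' = mx2 (Y' 0 0) (Y' 0 1) (Y' 1 0) (- Y' 0 0).
  by apply: tr0_mx2E; rewrite tr_conj // betaCN4_tr.
exists Q, b, (Y' 0 0), (Y' 0 1), (Y' 1 0); split => //.
- by move: dY'; rewrite {1}eY' det_mx2.
- by rewrite -gammaC_std_parabolic // -(gammaC_pml b) -hQ gammaC_conj // unit_det1.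
Qed.

Lemma pe_pair_normal_form X Y : pe_pair X Y -> gammaC X Y != 0 ->
  exists P b c, [/\ P \is a GRing.unit, c ^+ 2 = gammaC X Y,
    P^-1 * X * P = pm b U & P^-1 * Y * P = half_turn c].
Proof.
move=> pXY g_neq0; have [dX _ dY _] := pXY.
have X_neq s : X <> pm s 1.
  by move=> e; move: g_neq0; rewrite e gammaC_pm1 ?eqxx // unit_det1.
have [Q [b [a [b' [c [uQ hX hY dY' gc]]]]]] :=
  pe_pair_conj_triangular pXY (X_neq false) (X_neq true).
have c_neq0 : c != 0 by apply: contraNneq g_neq0 => c0; rewrite -gc c0 expr0n.
have [T uT [hU hT]] := conj_half_turn dY' c_neq0.
exists (Q * T), b, c; split; first by rewrite unitrMl.
- exact: gc.
- by rewrite conjM // hX conj_pm hU.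
- by rewrite conjM // hY.
Qed.

End NormalForms.

Section Closeness.
Variable R : realType.
Local Notation C := R[i].
Local Notation M := 'M[C]_2.
Implicit Types (X Y P S g : M) (b : bool) (r : R).

Definition close X Y r := forall i j, normc (X i j - Y i j) < r.
Definition entries_le X r := forall i j, normc (X i j) <= r.
Definition pm1 S := S = 1 \/ S = -1.

Lemma normc_ge0 (x : C) : 0 <= normc x.
Proof. by case: x => a b; apply: sqrtr_ge0. Qed.

Lemma pm1N S : pm1 S -> pm1 (- S).
Proof. by case=> ->; [right | left; rewrite opprK]. Qed.

Lemma pm1_pm b S : pm1 S -> pm1 (pm b S).
Proof. by case: b => //; apply: pm1N. Qed.

Lemma pm1M S S' : pm1 S -> pm1 S' -> pm1 (S * S').
Proof.
by case=> ->; case=> ->; rewrite ?mul1r ?mulr1 ?mulN1r ?opprK; [left|right|right|left].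
Qed.

Lemma pm1_conj P S : P \is a GRing.unit -> pm1 S -> P^-1 * S * P = S.
Proof. by move=> uP [] ->; rewrite ?mulrN ?mulNr mulr1 mulVr. Qed.

Lemma close_le X Y r r' : close X Y r -> r <= r' -> close X Y r'.
Proof. by move=> h hr i j; apply: lt_le_trans (h i j) hr. Qed.

Lemma close_pm b X Y r : close X Y r -> close (pm b X) (pm b Y) r.
Proof.
by move=> h i j; case: b; rewrite /= ?mxE -?opprD ?normcN; apply: h.
Qed.

Lemma close_sep X Y : X <> Y -> exists2 d, 0 < d & ~ close X Y d.
Proof.
move=> XY; have [eXY | /forallPn [i /forallPn [j Xij]]] :=
  boolP [forall i, [forall j, X i j == Y i j]].
  by case: XY; apply/matrixP => i j; move/forallP: eXY => /(_ i) /forallP /(_ j) /eqP.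
exists (normc (X i j - Y i j)); last by move=> /(_ i j); rewrite ltxx.
rewrite lt_def normc_ge0 andbT; apply: contra Xij => /eqP /eq0_normc /eqP.
by rewrite subr_eq0.
Qed.

Lemma nonpm1_sep g : ~ pm1 g -> exists2 d, 0 < d & forall S, pm1 S -> ~ close g S d.
Proof.
move=> g_nonpm1.
have [d1 d1_gt0 g1] := close_sep (fun e => g_nonpm1 (or_introl e)).
have [d2 d2_gt0 gN1] := close_sep (fun e => g_nonpm1 (or_intror e)).
exists (Num.min d1 d2); first by rewrite lt_min d1_gt0.
move=> S [] -> /close_le gS; [apply: g1 | apply: gN1];
  by apply: gS; rewrite ge_min lexx ?orbT.
Qed.

Lemma close_mulr_pm1 X S S' r : pm1 S' -> close (X * S') S r -> close X (S * S') r.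
Proof.
case=> ->; rewrite ?mulr1 // !mulrN1 => XS i j.
by rewrite mxE opprK -normcN opprD; have := XS i j; rewrite !mxE.
Qed.

Lemma entries_le_close X Y r : close X Y r -> entries_le (X - Y) r.
Proof. by move=> h i j; rewrite !mxE; apply/ltW/h. Qed.

Lemma close_entries_le X Y r r' : entries_le (X - Y) r -> r < r' -> close X Y r'.
Proof. by move=> h hr i j; have := h i j; rewrite !mxE => h'; apply: le_lt_trans h' hr. Qed.

Lemma entries_le_mono X r r' : entries_le X r -> r <= r' -> entries_le X r'.
Proof. by move=> h hr i j; apply: le_trans (h i j) hr. Qed.

Lemma entries_le_add X Y r r' :
  entries_le X r -> entries_le Y r' -> entries_le (X + Y) (r + r').
Proof. by move=> hX hY i j; rewrite mxE; apply: le_trans (le_normcD _ _) (lerD _ _). Qed.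

Lemma entries_le_mul X Y r r' : entries_le X r -> entries_le Y r' ->
  entries_le (X * Y) (2 * r * r').
Proof.
move=> hX hY i j; rewrite -mulmxE !mxE !big_ord_recl big_ord0 addr0 /=.
apply: le_trans (le_normcD _ _) _; rewrite !normcM.
have := hX i 0; have := hX i (lift 0 0); have := hY 0 j; have := hY (lift 0 0) j.
have := normc_ge0 (X i 0); have := normc_ge0 (X i (lift 0 0)).
have := normc_ge0 (Y 0 j); have := normc_ge0 (Y (lift 0 0) j).
by move=> *; nra.
Qed.

Lemma entries_le_pm1l S X r : pm1 S -> entries_le X r -> entries_le (S * X) r.
Proof. by case=> -> h; rewrite ?mul1r ?mulN1r // => i j; rewrite mxE normcN. Qed.

Lemma entries_le_pm1r S X r : pm1 S -> entries_le X r -> entries_le (X * S) r.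
Proof. by case=> -> h; rewrite ?mulr1 ?mulrN1 // => i j; rewrite mxE normcN. Qed.

Lemma entry_bound X : exists2 r, 1 <= r & entries_le X r.
Proof.
pose s := normc (X 0 0) + normc (X 0 1) + normc (X 1 0) + normc (X 1 1).
have := normc_ge0 (X 0 0); have := normc_ge0 (X 0 1).
have := normc_ge0 (X 1 0); have := normc_ge0 (X 1 1) => *.
exists (1 + s); first by rewrite /s; lra.
by move=> i j; case: (ord2P i) => ->; case: (ord2P j) => ->; rewrite /s; lra.
Qed.

Lemma entries_le_conj P g S K r : P \is a GRing.unit -> pm1 S ->
  entries_le P K -> entries_le P^-1 K -> close g S r ->
  entries_le (P * g * P^-1 - S) (2 * (2 * K * r) * K).
Proof.
move=> uP S_pm1 PK P'K gS.
have -> : P * g * P^-1 - S = P * (g - S) * P^-1.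
  by rewrite mulrBr mulrBl -[P in P * S]invrK pm1_conj ?unitrV.
by apply: entries_le_mul => //; apply: entries_le_mul => //; apply: entries_le_close.
Qed.

Lemma entries_le_invV_pm1 X S r : \det X = 1 -> pm1 S ->
  close X S r -> entries_le (X^-1 - S) r.
Proof.
move=> dX S_pm1 XS; have XSb := entries_le_close XS.
have -> : X^-1 = mx2 (X 1 1) (- X 0 1) (- X 1 0) (X 0 0).
  by rewrite {1}[X]mx2E invmx2 // -det_mx2 -mx2E.
have [s eS] : exists s : C, S = mx2 s 0 0 s.
  by case: S_pm1 => ->; [exists 1; rewrite mx2_1 | exists (-1); rewrite mx2_N1].
rewrite eS oppmx2 addmx2; rewrite eS in XSb => i j.
have := XSb 0 0; have := XSb 0 1; have := XSb 1 0; have := XSb 1 1.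
rewrite !mxE /= ?subr0.
by case: (ord2P i) => ->; case: (ord2P j) => ->; rewrite ?mxE /= ?oppr0 ?addr0 ?normcN.
Qed.

Lemma entries_le_mulV X Y S S' r : \det X = 1 -> pm1 S -> pm1 S' -> 0 <= r -> r <= 1 ->
  close X S r -> close Y S' r -> entries_le (X^-1 * Y - S * S') (4 * r).
Proof.
move=> dX S_pm1 S'_pm1 r_ge0 r_le1 XS YS'.
have -> : X^-1 * Y - S * S' = (X^-1 - S) * (Y - S') + S * (Y - S') + (X^-1 - S) * S'.
  by rewrite mulrBl !mulrBr mulrBl subrK addrA subrK.
apply: (@entries_le_mono _ (2 * r * r + r + r)); last by nra.
have XS' := entries_le_invV_pm1 dX S_pm1 XS; have YS'b := entries_le_close YS'.
apply: entries_le_add; last exact: entries_le_pm1r.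
by apply: entries_le_add; [apply: entries_le_mul | apply: entries_le_pm1l].
Qed.

End Closeness.

Section Discreteness.
Variable R : realType.
Local Notation C := R[i].
Local Notation M := 'M[C]_2.
Implicit Types (A B X Y P S g : M) (G H : M -> Prop) (b : bool) (r : R).

Lemma gen2_unit A B g : A \is a GRing.unit -> B \is a GRing.unit ->
  gen2 A B g -> g \is a GRing.unit.
Proof.
move=> uA uB; elim=> // [|x _|x y _ ux _ uy]; first exact: unitr1.
  by rewrite unitrV.
by rewrite unitrMl.
Qed.

Lemma gen2_det1 A B g : \det A = 1 -> \det B = 1 -> gen2 A B g -> \det g = 1.
Proof.
move=> dA dB; elim=> // [|x _|x y _ dx _ dy]; first exact: det1.
  exact: det_invM.
by rewrite det_mulM dx dy mulr1.
Qed.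

Lemma gen2_sub A B A' B' g : gen2 A B A' -> gen2 A B B' -> gen2 A' B' g -> gen2 A B g.
Proof. by move=> hA hB; elim=> *; try constructor. Qed.

Definition isolated G r :=
  forall g S, G g -> ~ pm1 g -> pm1 S -> ~ close g S r.

Lemma discrete_repP A B : discrete_rep A B <-> exists2 r, 0 < r & isolated (gen2 A B) r.
Proof.
have near_close X Y r : near X Y r%:C <-> close X Y r.
  by split=> h i j; have := h i j; rewrite [`|_|]/= ltcR.
split.
- case=> -[r b] []; rewrite ltcE /= => /andP [/eqP -> r_gt0] iso.
  exists r => // g S Gg g_nonpm1 S_pm1 /near_close gS.
  have g_neq1 : g <> 1 by move=> e; apply: g_nonpm1; left.
  have g_neqN1 : g <> -1 by move=> e; apply: g_nonpm1; right.
  by have [] := iso g Gg g_neq1 g_neqN1; case: S_pm1 gS => ->.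
- case=> r r_gt0 iso; exists r%:C; split; first by rewrite ltcR.
  move=> g Gg g_neq1 g_neqN1; have g_nonpm1 : ~ pm1 g by case.
  by split=> /near_close; apply: iso => //; rewrite /pm1; auto.
Qed.

Lemma isolated_conj G H P r0 : P \is a GRing.unit -> 0 < r0 -> isolated G r0 ->
  (forall g, H g -> exists b g0, G g0 /\ g = pm b (P^-1 * g0 * P)) ->
  exists2 r, 0 < r & isolated H r.
Proof.
move=> uP r0_gt0 isoG GH.
have [K1 K1_ge1 PK1] := entry_bound P; have [K2 K2_ge1 PK2] := entry_bound P^-1.
pose K := K1 + K2.
have PK : entries_le P K by apply: entries_le_mono PK1 _; rewrite /K; lra.
have P'K : entries_le P^-1 K by apply: entries_le_mono PK2 _; rewrite /K; lra.
have KK_gt0 : 0 < K * K by rewrite /K; nra.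
exists (r0 / (8 * (K * K))) => [|g S Hg g_nonpm1 S_pm1 gS].
  by apply: divr_gt0 => //; lra.
have [b [g0 [Gg0 eg]]] := GH g Hg.
have eg0 : P * pm b g * P^-1 = g0 by rewrite eg pmK !mulrA mulrV // mul1r mulrK.
have g0_close : close g0 (pm b S) r0.
  rewrite -eg0; apply: close_entries_le.
    exact: entries_le_conj uP (pm1_pm b S_pm1) PK P'K (close_pm b gS).
  have -> : 2 * (2 * K * (r0 / (8 * (K * K)))) * K = r0 / 2.
    by field; apply: lt0r_neq0; rewrite /K; lra.
  lra.
have g0_nonpm1 : ~ pm1 g0.
  move=> g0_pm1; have := pm1_pm b g0_pm1.
  by rewrite -(pm1_conj uP g0_pm1) -eg.
exact: (isoG _ _ Gg0 g0_nonpm1 (pm1_pm b S_pm1) g0_close).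
Qed.

Lemma discrete_transfer A B A' B' P : P \is a GRing.unit -> discrete_rep A B ->
  (forall g, gen2 A' B' g -> exists b g0, gen2 A B g0 /\ g = pm b (P^-1 * g0 * P)) ->
  discrete_rep A' B'.
Proof.
move=> uP /discrete_repP [r0 r0_gt0 iso] corr; apply/discrete_repP.
exact: isolated_conj uP r0_gt0 iso corr.
Qed.

Lemma discrete_sub A B A' B' :
  gen2 A B A' -> gen2 A B B' -> discrete_rep A B -> discrete_rep A' B'.
Proof.
move=> hA hB dAB; apply: (discrete_transfer (unitr1 _) dAB) => g hg.
by exists false, g; rewrite invr1 mul1r mulr1; split=> //; apply: gen2_sub hg.
Qed.

Lemma discrete_conj A B P b1 b2 :
  A \is a GRing.unit -> B \is a GRing.unit -> P \is a GRing.unit ->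
  discrete_rep A B -> discrete_rep (pm b1 (P^-1 * A * P)) (pm b2 (P^-1 * B * P)).
Proof.
move=> uA uB uP dAB; apply: (discrete_transfer uP dAB) => g; elim.
- by exists false, 1; rewrite mulr1 mulVr //; split=> //; constructor.
- by exists b1, A; split=> //; constructor.
- by exists b2, B; split=> //; constructor.
- move=> _ _ [b [g0 [hg0 ->]]]; exists b, g0^-1; split; first by constructor.
  by rewrite pm_inv conjV // (gen2_unit uA uB hg0).
- move=> _ _ _ [b [g1 [hg1 ->]]] _ [b' [g2 [hg2 ->]]].
  by exists (b (+) b'), (g1 * g2); split; [constructor | rewrite pm_mul conj_mul].
Qed.

Lemma discrete_conj_iff A B P b1 b2 :
  A \is a GRing.unit -> B \is a GRing.unit -> P \is a GRing.unit ->
  discrete_rep A B <-> discrete_rep (pm b1 (P^-1 * A * P)) (pm b2 (P^-1 * B * P)).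
Proof.
move=> uA uB uP; split; first exact: discrete_conj.
have uPV : P^-1 \is a GRing.unit by rewrite unitrV.
move=> /(discrete_conj b1 b2 _ _ uPV); rewrite !conj_pm invrK !conjK // !pmK.
by apply; apply/pm_unit; rewrite !unitrMr ?unitrMl ?unitrV.
Qed.

End Discreteness.

Section Classification.
Variable R : realType.
Local Notation C := R[i].
Local Notation M := 'M[C]_2.
Local Notation U := (@std_parabolic R).
Implicit Types (A B X Y P S g : M) (b : bool) (c : C).

Definition translation_int (n : int) : M := translation n%:~R.
Local Notation T := translation_int.

Lemma normc_intr_ge1 (n : int) : n != 0 -> 1 <= normc (n%:~R : C).
Proof.
move=> n_neq0; have -> : (n%:~R : C) = (n%:~R : R)%:C by rewrite rmorph_int.
rewrite /normc /= expr0n /= addr0 sqrtr_sqr -intr_norm ler1z.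
by rewrite -gtz0_ge1 normr_gt0.
Qed.

(* A translation by a nonzero integer has an entry of modulus >= 1 where +-1 has 0,
   and the diagonal of a trace-zero matrix cannot be within 1 of that of +-1. *)
Lemma discrete_translation_or_tr0 A B :
  (forall g, gen2 A B g ->
     (exists b (n : int), g = pm b (T n)) \/ \tr g = 0) ->
  discrete_rep A B.
Proof.
move=> H; apply/discrete_repP; exists 1 => // g S Gg g_nonpm1 S_pm1 gS.
have [s s_pm1 eS] : exists2 s : C, s = 1 \/ s = -1 & S = mx2 s 0 0 s.
  by case: S_pm1 => ->; [exists 1; rewrite ?mx2_1 | exists (-1); rewrite ?mx2_N1]; auto.
rewrite eS in gS; case: (H g Gg) => [[b [n eg]] | tg].
- have n_neq0 : n != 0.
    apply/eqP=> n0; move: eg; rewrite n0 /translation_int mulr0z translation0.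
    by case: b => /= eg; apply: g_nonpm1; rewrite eg; [right | left].
  have := gS 0 1; have := normc_intr_ge1 n_neq0.
  rewrite eg /translation_int.
  by case: b {eg} => /=; rewrite !mxE /= ?subr0 ?normcN; lra.
- have := gS 0 0; have := gS 1 1; rewrite !mxE /= => g11 g00.
  have e2s : s + s = - ((g 0 0 - s) + (g 1 1 - s)).
    have tg' : g 0 0 + g 1 1 = 0 by rewrite -(tr_mx2 _ (g 0 1) (g 1 0)) -mx2E.
    by apply: (eq_lincomb1 (k := 1) _ tg'); ring.
  have := le_normcD (g 0 0 - s) (g 1 1 - s).
  rewrite -normcN -e2s -mulr2n normcMn.
  have -> : normc s = 1 by case: s_pm1 => ->; rewrite ?normcN normc1.
  by rewrite mulr2n; lra.
Qed.

Lemma gen2_translation_tr0 (k : int) b Y g : \det Y = 1 -> \tr Y = 0 ->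
  k%:~R * Y 1 0 = 0 -> gen2 (pm b (T k)) Y g ->
  exists (c : bool) (n : int), n%:~R * Y 1 0 = 0 /\ (g = pm c (T n) \/ g = pm c (T n * Y)).
Proof.
move=> dY tY kY.
have TD (m n : int) : T m * T n = T (m + n).
  by rewrite /translation_int translationD intrD.
have T0 : T 0 = 1 by rewrite /translation_int mulr0z translation0.
have YY := tr0_sqr dY tY.
have YT (n : int) : n%:~R * Y 1 0 = 0 -> Y * T n = T (- n) * Y.
  by move=> nY; rewrite /translation_int intrN; apply: translation_tr0C.
have TY_inv (n : int) : n%:~R * Y 1 0 = 0 -> (T n * Y)^-1 = - (T n * Y).
  move=> nY; apply: inv_eq_mulr1.
  by rewrite mulrN mulrA -(mulrA (T n)) YT // mulrA TD subrr T0 mul1r YY opprK.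
elim.
- by exists false, 0; rewrite mulr0z mul0r T0; split=> //; left.
- by exists b, k; split=> //; left.
- by exists false, 0; rewrite mulr0z mul0r T0 mul1r; split=> //; right.
- move=> x _ [c [n [nY [->|->]]]]; rewrite pm_inv.
  + exists c, (- n); rewrite intrN mulNr nY oppr0 translationV -intrN.
    by split=> //; left.
  + by exists (~~ c), n; rewrite TY_inv // pmN; split=> //; right.
- move=> x y _ [c1 [n1 [n1Y [->|->]]]] _ [c2 [n2 [n2Y [->|->]]]]; rewrite pm_mul.
  + exists (c1 (+) c2), (n1 + n2); rewrite TD intrD mulrDl n1Y n2Y addr0.
    by split=> //; left.
  + exists (c1 (+) c2), (n1 + n2); rewrite mulrA TD intrD mulrDl n1Y n2Y addr0.
    by split=> //; right.
  + exists (c1 (+) c2), (n1 - n2); rewrite intrB mulrBl n1Y n2Y subrr.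
    by split=> //; right; rewrite -mulrA YT // mulrA TD.
  + exists (~~ (c1 (+) c2)), (n1 - n2); rewrite intrB mulrBl n1Y n2Y subrr.
    split=> //; left; rewrite -pmN mulrA -(mulrA (T n1)) YT // mulrA TD.
    by rewrite -mulrA YY mulrN1.
Qed.

Lemma discrete_translation_tr0 (k : int) b Y : \det Y = 1 -> \tr Y = 0 ->
  k%:~R * Y 1 0 = 0 -> discrete_rep (pm b (T k)) Y.
Proof.
move=> dY tY kY; apply: discrete_translation_or_tr0 => g.
move=> /(gen2_translation_tr0 dY tY kY) [c [n [nY [->|->]]]].
  by left; exists c, n.
by right; apply: tr_pm0; rewrite tr_translation_mul.
Qed.

Lemma discrete_gammaC0 X Y : pe_pair X Y -> gammaC X Y = 0 -> discrete_rep X Y.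
Proof.
move=> pXY g0; have [dX _ dY bY] := pXY; have tY := betaCN4_tr bY.
have discrete_pm1 s : discrete_rep (pm s 1) Y.
  have := @discrete_translation_tr0 0 s Y dY tY.
  by rewrite /translation_int mulr0z mul0r translation0; apply.
have [-> | /eqP X_neq1] := eqVneq X 1; first exact: (discrete_pm1 false).
have [-> | /eqP X_neqN1] := eqVneq X (-1); first exact: (discrete_pm1 true).
have [Q [b [a [b' [c [uQ hX hY dY' gc]]]]]] :=
  pe_pair_conj_triangular pXY X_neq1 X_neqN1.
have c0 : c = 0 by apply/eqP; move: gc; rewrite g0 => /eqP; rewrite expf_eq0.
apply/(discrete_conj_iff false false (unit_det1 dX) (unit_det1 dY) uQ).
rewrite /= hX hY; apply: (@discrete_translation_tr0 1).
- by rewrite det_mx2.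
- by rewrite tr_mx2 subrr.
- by rewrite mx2_10 c0 mulr0.
Qed.

Lemma discrete_half_turnN c : c != 0 ->
  discrete_rep U (half_turn c) -> discrete_rep U (half_turn (- c)).
Proof.
move=> c_neq0; have uU := unit_std_parabolic R; have uY := unit_half_turn c.
move=> /(discrete_conj_iff false true uU uY (unitr1 _)); rewrite invr1 !mul1r !mulr1 /=.
have -> : - half_turn c = mx2 (- 'i) 0 (- c) (- - 'i) by rewrite oppmx2 oppr0.
have dY : - 'i * - - 'i - 0 * - c = 1 :> C.
  by apply: (eq_lincomb1 (k := -1) _ (mulii R)); ring.
have Nc_neq0 : - c != 0 by rewrite oppr_eq0.
have [T uT [hU hY]] := conj_half_turn dY Nc_neq0.
move=> /(discrete_conj_iff false false uU _ uT); rewrite /= hU hY; apply.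
by apply: unit_det1; rewrite det_mx2.
Qed.

Lemma discrete_half_turn_sqr c c' : c != 0 -> c' ^+ 2 = c ^+ 2 ->
  discrete_rep U (half_turn c) -> discrete_rep U (half_turn c').
Proof.
move=> c_neq0 e; have : (c' - c) * (c' + c) = 0 by apply: (eq_lincomb1 (k := 1) _ e); ring.
move/eqP; rewrite mulf_eq0 => /orP [] /eqP e'.
  by have -> : c' = c by apply: (eq_lincomb1 (k := 1) _ e'); ring.
have -> : c' = - c by apply: (eq_lincomb1 (k := 1) _ e'); ring.
exact: discrete_half_turnN.
Qed.

Lemma discrete_pe_pairP X Y c : pe_pair X Y -> gammaC X Y != 0 -> c ^+ 2 = gammaC X Y ->
  discrete_rep X Y <-> discrete_rep U (half_turn c).
Proof.
move=> pXY g_neq0 gc; have [dX _ dY _] := pXY.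
have [P [b [c0 [uP gc0 hX hY]]]] := pe_pair_normal_form pXY g_neq0.
have sqrt_neq0 x : x ^+ 2 = gammaC X Y -> x != 0.
  by move=> gx; apply: contraNneq g_neq0 => x0; rewrite -gx x0 expr0n.
rewrite (discrete_conj_iff b false (unit_det1 dX) (unit_det1 dY) uP) /= hX hY pmK.
by split; apply: discrete_half_turn_sqr; rewrite ?gc ?gc0 //; apply: sqrt_neq0.
Qed.

Lemma discrete_pe_pair_gammaC X Y X' Y' : pe_pair X Y -> pe_pair X' Y' ->
  gammaC X' Y' = gammaC X Y -> gammaC X Y != 0 -> discrete_rep X Y -> discrete_rep X' Y'.
Proof.
move=> pXY pXY' e g_neq0 dXY; have gc := sqr_sqrtc (gammaC X Y).
apply/(discrete_pe_pairP (c := sqrtc (gammaC X Y)) pXY'); rewrite ?e //.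
by apply/(discrete_pe_pairP pXY g_neq0 gc).
Qed.

End Classification.

Section IndexTwo.
Variable R : realType.
Local Notation M := 'M[R[i]]_2.
Implicit Types (G : M -> Prop) (A B h g : M) (r : R).

(* If h g1 and h g0 are both close to signs, then g1^-1 g0 in G is close to a sign,
   hence is one: only the two elements +-h g1 of the coset can come close to +-1. *)
Lemma isolated_coset_union G h r0 :
  (forall g, G g -> \det g = 1) -> (forall g, G g -> G g^-1) ->
  (forall g g', G g -> G g' -> G (g * g')) -> \det h = 1 ->
  0 < r0 -> isolated G r0 ->
  exists2 r, 0 < r & isolated (fun g => G g \/ exists2 g0, G g0 & g = h * g0) r.
Proof.
move=> G_det G_inv G_mul det_h r0_gt0 G_iso.
pose r1 := r0 / (8 * (1 + r0)).
have r1_gt0 : 0 < r1 by apply: divr_gt0 => //; lra.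
have r1E : r1 * (8 * (1 + r0)) = r0 by rewrite mulfVK // lt0r_neq0 //; lra.
have r1_le1 : r1 <= 1 by nra.
have r1_le : r1 <= r0 by nra.
have uh := unit_det1 det_h.
have coset_close g0 g1 S S1 : G g0 -> G g1 -> pm1 S -> pm1 S1 ->
    close (h * g1) S1 r1 -> close (h * g0) S r1 -> pm1 (g1^-1 * g0).
  move=> G0 G1 S_pm1 S1_pm1 c1 c0; apply: NNPP => nonpm1.
  have ug1 := unit_det1 (G_det _ G1).
  have := entries_le_mulV _ S1_pm1 S_pm1 (ltW r1_gt0) r1_le1 c1 c0.
  rewrite invrM // -mulrA mulKr // det_mulM det_h G_det // mulr1 => /(_ erefl) b.
  apply: (G_iso _ _ (G_mul _ _ (G_inv _ G1) G0) nonpm1 (pm1M S1_pm1 S_pm1)).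
  by apply: close_entries_le b _; nra.
have [[g1 [G1 [hg1_nonpm1 [S1 S1_pm1 c1]]]] | no_bad] := classic
  (exists g1, G g1 /\ ~ pm1 (h * g1) /\ exists2 S1, pm1 S1 & close (h * g1) S1 r1).
- have [d d_gt0 sep] := nonpm1_sep hg1_nonpm1.
  exists (Num.min r1 d) => [|g S [Gg | [g0 G0 ->]] g_nonpm1 S_pm1 cS].
  + by rewrite lt_min r1_gt0.
  + apply: (G_iso _ _ Gg g_nonpm1 S_pm1); apply: close_le cS _.
    by rewrite ge_min (le_trans _ r1_le) ?lexx.
  + have cS1 : close (h * g0) S r1 by apply: close_le cS _; rewrite ge_min lexx.
    have S'_pm1 := coset_close _ _ _ _ G0 G1 S_pm1 S1_pm1 c1 cS1.
    apply: (sep _ (pm1M S_pm1 S'_pm1)); apply: close_mulr_pm1 => //.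
    rewrite mulrA mulrK ?unit_det1 ?G_det //.
    by apply: close_le cS _; rewrite ge_min lexx orbT.
- exists r1 => // g S [Gg | [g0 G0 ->]] g_nonpm1 S_pm1 cS.
    by apply: (G_iso _ _ Gg g_nonpm1 S_pm1); apply: close_le cS _.
  by apply: no_bad; exists g0; split=> //; split=> //; exists S.
Qed.

Definition pmgen2 A B g := gen2 A B g \/ gen2 A B (- g).

Lemma pmgen2N A B g : pmgen2 A B g -> pmgen2 A B (- g).
Proof. by case=> Gg; [right; rewrite opprK | left]. Qed.

Lemma pmgen2V A B g : pmgen2 A B g -> pmgen2 A B g^-1.
Proof. by case=> Gg; [left | right; rewrite -invrN]; constructor. Qed.

Lemma pmgen2M A B g g' : pmgen2 A B g -> pmgen2 A B g' -> pmgen2 A B (g * g').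
Proof.
case=> Gg [] Gg';
  [left | right; rewrite -mulrN | right; rewrite -mulNr | left; rewrite -mulrNN];
  by constructor.
Qed.

Lemma pmgen2_det A B g : \det A = 1 -> \det B = 1 -> pmgen2 A B g -> \det g = 1.
Proof. by move=> dA dB [] /(gen2_det1 dA dB); rewrite ?det_oppM. Qed.

Lemma isolated_pmgen2 A B r : isolated (gen2 A B) r -> isolated (pmgen2 A B) r.
Proof.
move=> iso g S [Gg | GNg] g_nonpm1 S_pm1; first exact: iso.
move=> /(close_pm true) /=; apply: iso GNg _ (pm1N S_pm1).
by move=> /pm1N; rewrite opprK.
Qed.

Lemma pmgen2_conj A B h g :
  A \is a GRing.unit -> B \is a GRing.unit -> h \is a GRing.unit ->
  pmgen2 A B (h^-1 * A * h) -> pmgen2 A B (h^-1 * B * h) ->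
  pmgen2 A B g -> pmgen2 A B (h^-1 * g * h).
Proof.
move=> uA uB uh hA hB.
have conj_gen2 x : gen2 A B x -> pmgen2 A B (h^-1 * x * h).
  elim=> [|||x' Gx' IH|x' y _ IHx _ IHy].
  - by rewrite mulr1 mulVr //; left; constructor.
  - exact: hA.
  - exact: hB.
  - by rewrite -conjV ?(gen2_unit uA uB Gx') //; apply: pmgen2V.
  - by rewrite -conj_mul //; apply: pmgen2M.
case=> [/conj_gen2 // | /conj_gen2].
by rewrite mulrN mulNr => /pmgen2N; rewrite opprK.
Qed.

Lemma gen2_coset A B h g : \det A = 1 -> \det B = 1 -> \det h = 1 -> \tr h = 0 ->
  pmgen2 A B (h^-1 * A * h) -> pmgen2 A B (h^-1 * B * h) ->
  gen2 A (h * B) g -> pmgen2 A B g \/ exists2 g0, pmgen2 A B g0 & g = h * g0.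
Proof.
move=> dA dB dh th hA hB; have uh := unit_det1 dh; have hh := tr0_sqr dh th.
have hV : h^-1 = - h by apply: inv_eq_mulr1; rewrite mulrN hh opprK.
have hconj := pmgen2_conj (unit_det1 dA) (unit_det1 dB) uh hA hB.
elim.
- by left; left; constructor.
- by left; left; constructor.
- by right; exists B => //; left; constructor.
- move=> x _ [G0 | [g0 G0 ->]]; first by left; apply: pmgen2V.
  right; exists (- (h^-1 * g0^-1 * h)); first by apply/pmgen2N/hconj/pmgen2V.
  have ug0 := unit_det1 (pmgen2_det dA dB G0).
  by rewrite mulrN !mulrA mulrV // mul1r invrM // hV mulrN.
- move=> x y _ [Gx | [g1 G1 ->]] _ [Gy | [g2 G2 ->]].
  + by left; apply: pmgen2M.
  + right; exists (h^-1 * x * h * g2); first exact: pmgen2M (hconj _ Gx) G2.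
    by rewrite !mulrA mulrV // mul1r.
  + by right; exists (g1 * y); [apply: pmgen2M | rewrite mulrA].
  + left; have -> : h * g1 * (h * g2) = - (h^-1 * g1 * h * g2).
      by rewrite hV !mulNr opprK !mulrA.
    exact/pmgen2N/(pmgen2M (hconj _ G1) G2).
Qed.

Lemma discrete_coset_extension A B h : \det A = 1 -> \det B = 1 ->
  \det h = 1 -> \tr h = 0 ->
  pmgen2 A B (h^-1 * A * h) -> pmgen2 A B (h^-1 * B * h) ->
  discrete_rep A B -> discrete_rep A (h * B).
Proof.
move=> dA dB dh th hA hB /discrete_repP [r0 r0_gt0 /isolated_pmgen2 iso].
have [r r_gt0 iso'] := isolated_coset_union (fun g => @pmgen2_det A B g dA dB)
  (@pmgen2V A B) (@pmgen2M A B) dh r0_gt0 iso.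
apply/discrete_repP; exists r => // g S /(gen2_coset dA dB dh th hA hB).
exact: iso'.
Qed.

End IndexTwo.

Section WordPairs.
Variable R : realType.
Local Notation C := R[i].
Local Notation M := 'M[C]_2.
Local Notation U := (@std_parabolic R).
Implicit Types (A B X Y g w : M) (c : C).

Lemma discrete_tr0_factor w : \det w = 1 -> w 1 0 != 0 -> discrete_rep U w ->
  exists psi, [/\ \det psi = 1, \tr psi = 0, psi 1 0 = - 'i * w 1 0 & discrete_rep U psi].
Proof.
move=> dw w10_neq0 dUw; have uw := unit_det1 dw.
have [s hs] : exists s, s * w 1 0 = 'i * (w 1 1 - w 0 0).
  by exists ('i * (w 1 1 - w 0 0) / w 1 0); rewrite mulfVK.
(* h inverts U and w by conjugation; s makes tr (h w) = 0 *)
pose h := mx2 'i s 0 (- 'i).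
have dh : \det h = 1.
  by rewrite det_mx2; apply: (eq_lincomb1 (k := -1) _ (mulii R)); ring.
have th : \tr h = 0 by rewrite tr_mx2 subrr.
have hV : h^-1 = - h by apply: inv_eq_mulr1; rewrite mulrN tr0_sqr // opprK.
have dhw : \det (h * w) = 1 by rewrite det_mulM dh dw mulr1.
have thw : \tr (h * w) = 0.
  by rewrite /h [w]mx2E mulmx2 tr_mx2; apply: (eq_lincomb1 (k := 1) _ hs); ring.
exists (h * w); split=> //; first by rewrite /h [w]mx2E mulmx2 !mx2_10; ring.
apply: discrete_coset_extension => //; first exact: det_translation.
  left; have -> : h^-1 * U * h = U^-1.
    rewrite hV translationV /std_parabolic /translation oppmx2 !mulmx2.
    by apply: mx2_eq; first [ring | apply: (eq_lincomb1 (k := -1) _ (mulii R)); ring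
      | apply: (eq_lincomb1 (k := 1) _ (mulii R)); ring].
  by do 2 constructor.
have hwh : h * w * h = - w^-1.
  have hwhw := tr0_sqr dhw thw.
  by apply: (mulIr uw) => /=; rewrite -(mulrA (h * w) h w) hwhw mulNr mulVr.
by left; rewrite hV !mulNr hwh opprK; do 2 constructor.
Qed.

Lemma gen2_expz A B x (m : int) : gen2 A B x -> gen2 A B (x ^ m).
Proof.
have gen2_expr n : gen2 A B x -> gen2 A B (x ^+ n).
  by move=> Gx; elim: n => [|n IH]; rewrite ?expr0 ?exprS; constructor.
by case: m => n Gx /=; [apply: gen2_expr | constructor; apply: gen2_expr].
Qed.

Lemma gen2_word_eval (f phi : M) ms : gen2 f phi (word_eval f phi ms).
Proof.
elim: ms => [|m [|m' ms] IH] /=; first exact: gen2_1.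
  by apply/gen2_expz/gen2_A.
by do 2 apply: gen2_mul => //; [apply/gen2_expz/gen2_A | apply: gen2_B].
Qed.

Lemma gen2_half_turn0_lower g : gen2 U (half_turn 0) g -> g 1 0 = 0 /\ \det g = 1.
Proof.
elim=> [|||x _ [x10 dx]|x y _ [x10 dx] _ [y10 dy]].
- by rewrite det1 [1 : M]mx2_1 mx2_10.
- by rewrite mx2_10 det_translation.
- by rewrite mx2_10 det_half_turn.
- split; last exact: det_invM.
  by move: dx; rewrite [x]mx2E det_mx2 x10 => dx; rewrite invmx2 // mx2_10 oppr0.
- split; last by rewrite det_mulM dx dy mulr1.
  by rewrite [x]mx2E [y]mx2E mulmx2 mx2_10 x10 y10 mul0r mulr0 addr0.
Qed.

Lemma word_poly_at0 ms p : word_poly R ms p -> peval p (0 : C) = 0.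
Proof.
case=> _ /(_ U (half_turn 0) (std_parabolicP R) (half_turnP (0 : C))).
have [w10 dw] := gen2_half_turn0_lower (gen2_word_eval U (half_turn 0) ms).
by rewrite !gammaC_std_parabolic ?det_half_turn // w10 mx2_10 expr0n => <-.
Qed.

Lemma principal_character_half_turn c :
  principal_character U (half_turn c) = (c ^+ 2, 0, -4).
Proof.
rewrite /principal_character gammaC_std_parabolic ?det_half_turn // mx2_10.
by rewrite /betaC tr_std_parabolic tr_half_turn; congr (_, _, _); ring.
Qed.

Lemma pe_pair_std_parabolic Y : \det Y = 1 -> \tr Y = 0 -> pe_pair U Y.
Proof.
by move=> dY tY; split; rewrite ?det_translation // /betaC ?tY ?tr_std_parabolic; ring.
Qed.

Lemma discrete_word_tr0 c ms p : word_poly R ms p -> peval p (c ^+ 2) != 0 ->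
  discrete_rep U (half_turn c) -> exists psi,
    [/\ \det psi = 1, \tr psi = 0, gammaC U psi = peval p (c ^+ 2) & discrete_rep U psi].
Proof.
move=> [_ wp] pc_neq0 dUc; pose W := word_eval U (half_turn c) ms.
have GW : gen2 U (half_turn c) W := gen2_word_eval _ _ ms.
have dW : \det W = 1 := gen2_det1 (det_translation 1) (det_half_turn c) GW.
have gW : gammaC U W = peval p (c ^+ 2).
  rewrite (wp _ _ (std_parabolicP R) (half_turnP c)).
  by rewrite gammaC_std_parabolic ?det_half_turn // mx2_10.
have W10 : W 1 0 != 0.
  by apply: contraNneq pc_neq0 => W10; rewrite -gW gammaC_std_parabolic // W10 expr0n.
have [psi1 [dpsi1 _ epsi1 dUpsi1]] :=
  discrete_tr0_factor dW W10 (discrete_sub (gen2_A _ _) GW dUc).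
have i_neq0 : 'i != 0 :> C by apply/eqP => -[/eqP]; rewrite oner_eq0.
have psi1_10 : psi1 1 0 != 0 by rewrite epsi1 mulf_neq0 // oppr_eq0.
have [psi [dpsi tpsi epsi dUpsi]] := discrete_tr0_factor dpsi1 psi1_10 dUpsi1.
(* two factor steps multiply the (1,0) entry by (-i)^2 = -1 *)
exists psi; split=> //; rewrite gammaC_std_parabolic // epsi epsi1.
rewrite -gW gammaC_std_parabolic //.
by apply: (eq_lincomb1 (k := ('i * 'i - 1) * W 1 0 ^+ 2) _ (mulii R)); ring.
Qed.

End WordPairs.

Theorem theorem8 (R : realType) (A B : 'M[R[i]]_2) (gamma : R[i])
    (ms : seq int) (p : {poly int}) :
  is_rep A B -> irreducible_rep A B ->
  principal_character A B = (gamma, 0, -4) ->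
  good_word ms -> word_poly R ms p ->
  (exists A' B' : 'M[R[i]]_2,
      is_rep A' B' /\ principal_character A' B' = (peval p gamma, 0, -4)) /\
  (discrete_rep A B ->
   forall A' B' : 'M[R[i]]_2, is_rep A' B' ->
     principal_character A' B' = (peval p gamma, 0, -4) ->
     discrete_rep A' B').
Proof.
move=> rep _ char _ wp; have [pAB gAB] := pe_pairP rep char.
pose U := @std_parabolic R.
split.
  exists U, (half_turn (sqrtc (peval p gamma))); split.
    by split; [apply: det_translation | apply: det_half_turn].
  by rewrite principal_character_half_turn sqr_sqrtc.
move=> dAB A' B' rep' char'; have [pAB' gAB'] := pe_pairP rep' char'.
have [pg0 | pg_neq0] := eqVneq (peval p gamma) 0.
  by apply: discrete_gammaC0; rewrite // gAB' pg0.
have g_neq0 : gamma != 0.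
  by apply: contraNneq pg_neq0 => ->; rewrite (word_poly_at0 wp).
have gc := sqr_sqrtc gamma.
have dUc : discrete_rep U (half_turn (sqrtc gamma)).
  by apply/(discrete_pe_pairP pAB); rewrite ?gAB.
rewrite -gc in pg_neq0.
have [psi [dpsi tpsi gpsi dUpsi]] := discrete_word_tr0 wp pg_neq0 dUc.
apply: (discrete_pe_pair_gammaC (pe_pair_std_parabolic dpsi tpsi)) => //.
  by rewrite gAB' gpsi gc.
by rewrite gpsi.
Qed.
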